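(* Let $k$ be an algebraically closed field of characteristic $p>2$, let $X$ be the smooth projective curve over $k$ with affine equation $y^2=x^p-x$, of genus $g=(p-1)/2$, and let $G=\operatorname{Aut}_k(X)$, described below. Let $\theta:\operatorname{SL}_2(\mathbf{F}_p)\to G$ send $\sigma$ to the class of $(\sigma,1)$, and let $H=\operatorname{im}\theta$. Let $V$ be the $k[H]$-module $\operatorname{Sym}^{g-1}(k^2)$ described below. Then the $k$-linear map $$\varphi: \operatorname{res}_H\big(H^0(X,\Omega^1_{X/k})\big)\to V,\qquad \frac{x^i\,dx}{y}\mapsto u^iv^{g-i-1}\quad (i=0,\dots,g-1)$$ is an isomorphism of $k[H]$-modules.
   Context: Let $\widetilde G\subseteq \operatorname{GL}_2(\mathbf{F}_p)\times \mathbf{F}_{p^2}^\times$ be the subgroup of pairs $(\sigma,u_\sigma)$ with $\det\sigma=u_\sigma^2$; $\mathbf{F}_p^\times$ acts on $\widetilde G$ by $\lambda(\sigma,u_\sigma)=(\lambda\sigma,\lambda^{(p+1)/2}u_\sigma)$, and $G=\mathbf{F}_p^\times\backslash\widetilde G$, which equals $\operatorname{Aut}_k(X)$. The class of $(\sigma,u_\sigma)$ with $\sigma=\begin{pmatrix}a&b\\c&d\end{pmatrix}$ acts on affine coordinates of $X$ by $(x,y)\mapsto\left(\frac{ax+b}{cx+d},\,u_\sigma\frac{y}{(cx+d)^{(p+1)/2}}\right)$, and $G$ acts on $H^0(X,\Omega^1_{X/k})$ functorially (by pullback/transport of forms). The elements $x^i\,dx/y$, $i=0,\dots,g-1$, form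 a $k$-basis of $H^0(X,\Omega^1_{X/k})$. Identify $\operatorname{Sym}^{g-1}(k^2)$ with the homogeneous polynomials of degree $g-1$ in $k[u,v]$, with $\begin{pmatrix}a&b\\c&d\end{pmatrix}\in\operatorname{SL}_2(\mathbf{F}_p)$ acting by substituting $u\mapsto au+bv$, $v\mapsto cu+dv$. The kernel of $\theta$ ($\{I\}$ if $p\equiv1\bmod 4$, $\{\pm I\}$ if $p\equiv 3\bmod 4$) acts trivially on this space, so $h=\theta(\sigma)\in H$ acting as $\sigma$ gives a well-defined $k[H]$-module $V$. *)

From HB Require Import structures.
From mathcomp Require Import all_boot all_order all_algebra all_field.
From mathcomp Require Import mpoly fraction.
Set Implicit Arguments. Unset Strict Implicit. Unset Printing Implicit Defensive.
Import Order.TTheory GRing.Theory.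
Local Open Scope ring_scope.

(* F := k(x) = {fraction {poly k}};  an element (a,b) of
   K := F * F stands for a + b*y in k(X) = F(y) (y^2 = x^p - x);  a
   meromorphic differential  w dx  (w in K) is represented by w. *)
Section Curve.
Variables (k : fieldType) (p : nat).

Definition genus : nat := (p.-1)./2.

Local Notation F := {fraction {poly k}}.
Local Notation "x %:F" := (@FracField.tofrac _ x).
Local Notation tofrac := (@FracField.tofrac _).
Local Notation K := (F * F)%type.

Definition xF : F := ('X)%:F.
Definition fF : F := xF ^+ p - xF.

Definition addK (u v : K) : K := (u.1 + v.1, u.2 + v.2).
Definition mulK (u v : K) : K :=
  (u.1 * v.1 + u.2 * v.2 * fF, u.1 * v.2 + u.2 * v.1).
Definition invK (u : K) : K :=
  let n := u.1 ^+ 2 - u.2 ^+ 2 * fF in (u.1 / n, - u.2 / n).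
Definition yK : K := (0, 1).

Definition derF (q : F) : F :=
  let r := repr q in
  ((\n_r)^`() * \d_r - \n_r * (\d_r)^`())%:F / ((\d_r) ^+ 2)%:F.

(* sigma in SL_2(F_p), entries embedded in k (char k = p) *)
Definition ent (s : 'M['F_p]_2) (i j : 'I_2) : k := (nat_of_ord (s i j))%:R.

Definition mob (s : 'M['F_p]_2) : F :=
  (ent s 0 0 *: 'X + (ent s 0 1)%:P)%:F / (ent s 1 0 *: 'X + (ent s 1 1)%:P)%:F.
Definition evalF (s : 'M['F_p]_2) (P : {poly k}) : F := (map_poly (fun a : k => (a%:P)%:F) P).[mob s].
Definition subF (s : 'M['F_p]_2) (q : F) : F :=
  evalF s (\n_(repr q)) / evalF s (\d_(repr q)).

(* the automorphism of k(X) (pull-back of functions) attached to the class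
   of (sigma, u_sigma) with u_sigma = 1:
   x |-> (a x + b)/(c x + d),  y |-> 1 * y / (c x + d)^((p+1)/2) *)
Definition sigma_y (s : 'M['F_p]_2) : K :=
  (0, ((ent s 1 0 *: 'X + (ent s 1 1)%:P)%:F ^+ (p.+1)./2)^-1).
Definition actK (s : 'M['F_p]_2) (w : K) : K :=
  addK (subF s w.1, 0) (mulK (subF s w.2, 0) (sigma_y s)).

(* pull-back of differentials:  sigma^*(w dx) = sigma(w) d(sigma x) *)
Definition pullback (s : 'M['F_p]_2) (w : K) : K :=
  mulK (actK s w) (derF (subF s xF), 0).

Definition omega (i : nat) : K := mulK (xF ^+ i, 0) (invK yK).

Definition omega_of (c : 'rV[k]_genus) : K :=
  (\sum_(i < genus) ((c 0 i)%:P)%:F * (omega i).1,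
   \sum_(i < genus) ((c 0 i)%:P)%:F * (omega i).2).

(* Sym^{g-1}(k^2) = homogeneous polynomials of degree g-1 in k[u,v];
   u = 'X_0, v = 'X_1 *)
Definition sym_of (c : 'rV[k]_genus) : {mpoly k[2]} :=
  \sum_(i < genus) c 0 i *: ('X_0 ^+ i * 'X_1 ^+ (genus.-1 - i)).

Definition actV (s : 'M['F_p]_2) (P : {mpoly k[2]}) : {mpoly k[2]} :=
  P \mPo [tuple ent s 0 0 *: 'X_0 + ent s 0 1 *: 'X_1;
                ent s 1 0 *: 'X_0 + ent s 1 1 *: 'X_1].

End Curve.

From HB Require Import structures.
From mathcomp Require Import all_boot all_order all_algebra all_field.
From mathcomp Require Import mpoly fraction generic_quotient.
From mathcomp Require Import ring zify.
Set Implicit Arguments.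
Unset Strict Implicit.
Unset Printing Implicit Defensive.
Import GRing.Theory.
Local Open Scope ring_scope.
Local Open Scope quotient_scope.

(* The automorphism attached to [s = [[a, b], [c, d]]] sends [x] to [(a x + b)/(c x + d)] and
   [y] to [y / (c x + d)^(g+1)], so it pulls [dx] back to [dx / (c x + d)^2].  In
   characteristic [p] the entries of [s] are fixed by Frobenius, whence
   [(a x + b)^p (c x + d) - (a x + b) (c x + d)^p = det s * (x^p - x)]: the Moebius
   substitution pulls [y^2 = x^p - x] back to [(x^p - x) / (c x + d)^(p+1)].  With
   [p + 1 = 2 (g + 1)] the powers of [c x + d] collect into
   [s^*(P(x) dx/y) = Q(x) dx/y] where [Q = (c x + d)^(g-1) P((a x + b)/(c x + d))], and [Q]
   is exactly the dehomogenisation [u |-> x, v |-> 1] of [s] acting on the degree [g-1]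
   form whose dehomogenisation is [P]. *)

Local Notation "x %:F" := (@FracField.tofrac _ x).

Section FractionField.
Variable R : idomainType.
Local Notation F := {fraction R}.

Lemma denom_repr_neq0 (q : F) : \d_(repr q) != 0.
Proof. exact: denom_ratioP. Qed.

Lemma frac_repr (q : F) : q = (\n_(repr q))%:F / (\d_(repr q))%:F.
Proof.
rewrite -{1}[q]reprK; set r := repr q; unlock FracField.tofrac.
set d := \pi_F (Ratio \d_r 1); set n := \pi_F (Ratio \n_r 1).
have -> : d^-1 = \pi_F (FracField.invf (Ratio \d_r 1)).
  exact: esym (FracField.pi_inv _).
have -> : n * \pi_F (FracField.invf (Ratio \d_r 1)) =
    \pi_F (FracField.mulf (Ratio \n_r 1) (FracField.invf (Ratio \d_r 1))).
  exact: esym (FracField.pi_mul _ _).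
apply/eqmodP; rewrite /= FracField.equivfE /FracField.invf /FracField.mulf /=.
have n1 x : \n_(Ratio x (1 : R)) = x := numer_Ratio _ (oner_neq0 _).
have d1 x : \d_(Ratio x (1 : R)) = 1 := denom_Ratio _ (oner_neq0 _).
have dr_neq0 := denom_repr_neq0 q.
rewrite !n1 !d1 (numer_Ratio _ dr_neq0) (denom_Ratio _ dr_neq0) !mul1r mulr1.
by rewrite numer_Ratio // denom_Ratio // mulrC.
Qed.

Lemma tofrac_div_eq (n d n' d' : R) : d != 0 -> d' != 0 ->
  n%:F / d%:F = n'%:F / d'%:F -> n * d' = n' * d.
Proof.
move=> d_neq0 d'_neq0 /eqP; rewrite eqr_div ?tofrac_eq0 // -!rmorphM /=.
by rewrite tofrac_eq => /eqP.
Qed.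
End FractionField.

Lemma derF_div (k : fieldType) (n d : {poly k}) : d != 0 ->
  derF (n%:F / d%:F) = (n^`() * d - n * d^`())%:F / (d ^+ 2)%:F.
Proof.
move=> d_neq0; rewrite /derF; set q := n%:F / d%:F.
have q_repr := frac_repr q; have dq_neq0 := denom_repr_neq0 q.
move: (repr q) q_repr dq_neq0 => r q_repr dq_neq0.
have cross : \n_r * d = n * \d_r by apply: tofrac_div_eq => //; rewrite -q_repr.
have dcross := congr1 deriv cross; rewrite !derivM in dcross.
apply/eqP; rewrite eqr_div ?tofrac_eq0 ?expf_neq0 // -!rmorphM /= tofrac_eq.
apply/eqP; set n0 := \n_r in cross dcross *; set d0 := \d_r in cross dcross *.
transitivity (d0 * d * (n0^`() * d + n0 * d^`()) - d0 * d^`() * (n0 * d)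
              - d * d0^`() * (n0 * d)); first by ring.
by rewrite dcross cross; ring.
Qed.

Lemma det_mx22 (R : comPzRingType) (A : 'M[R]_2) :
  \det A = A 0 0 * A 1 1 - A 0 1 * A 1 0.
Proof.
rewrite (expand_det_row _ 0) !big_ord_recl big_ord0 addr0 /cofactor !det_mx11.
rewrite /= expr0 expr1 mul1r mulN1r mulrN !mxE.
by congr (_ * A _ _ - A 0 _ * A _ _); apply: val_inj.
Qed.

Lemma det_ent (k : fieldType) (p : nat) (s : 'M['F_p]_2) :
  prime p -> p \in [pchar k] -> \det s = 1 ->
  @ent k p s 0 0 * @ent k p s 1 1 - @ent k p s 0 1 * @ent k p s 1 0 = 1.
Proof.
move=> p_pr p_char; rewrite det_mx22 => det_s.
pose A := muln (s 0 0) (s 1 1); pose B := muln (s 0 1) (s 1 0).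
have AB_Fp : (A%:R : 'F_p) = (B + 1)%:R.
  by rewrite /A /B natrD !natrM !natr_Zp -det_s; ring.
have AB_mod : (A %% p = (B + 1) %% p)%N by rewrite -!val_Fp_nat // AB_Fp.
have : (A%:R : k) = (B + 1)%:R.
  by rewrite -(GRing.natr_mod_pchar p_char) AB_mod GRing.natr_mod_pchar.
by rewrite /ent /A /B !natrM natrD => ->; ring.
Qed.

Section AffinePoly.
Variables (R : nzRingType) (u v : R).

Lemma coef0_affine : (u *: 'X + v%:P)`_0 = v.
Proof. by rewrite coefD coefZ coefX coefC mulr0 add0r. Qed.

Lemma coef1_affine : (u *: 'X + v%:P)`_1 = u.
Proof. by rewrite coefD coefZ coefX coefC mulr1 addr0. Qed.

Lemma deriv_affine : (u *: 'X + v%:P)^`() = u%:P.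
Proof. by rewrite derivD derivZ derivX derivC addr0 alg_polyC. Qed.
End AffinePoly.

Lemma frobenius_affine (R : comNzRingType) (p : nat) (u v : R) :
  p \in [pchar R] -> u ^+ p = u -> v ^+ p = v ->
  (u *: 'X + v%:P) ^+ p = u *: 'X^p + v%:P.
Proof.
move=> p_char up vp; have p_charP : p \in [pchar {poly R}] by rewrite pchar_poly.
rewrite -(pFrobenius_autE p_charP) pFrobenius_autD_comm; last exact: mulrC.
by rewrite !pFrobenius_autE exprZn up -rmorphXn /= vp.
Qed.

Lemma genus_double (p : nat) : prime p -> (2 < p)%N -> p = (genus p).*2.+1.
Proof.
move=> p_pr p_gt2; have [p2|p_odd] := even_prime p_pr; first by rewrite p2 in p_gt2.
have := odd_double_half p; rewrite p_odd add1n; move: (p./2) => m <-.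
by rewrite /genus /= doubleK.
Qed.

Lemma genus_gt0 (p : nat) : prime p -> (2 < p)%N -> (0 < genus p)%N.
Proof.
move=> p_pr p_gt2; have := genus_double p_pr p_gt2.
by case: (genus p) => // p1; move: p_gt2; rewrite p1.
Qed.

Lemma rVpolyE (R : nzRingType) (n : nat) (v : 'rV[R]_n) :
  rVpoly v = \sum_(i < n) v 0 i *: 'X^i.
Proof. by rewrite /rVpoly poly_def; apply: eq_bigr => i _; rewrite valK. Qed.

Section Differentials.
Variables (k : fieldType) (p : nat).
Local Notation g := (genus p).

Lemma fFE : fF k p = ('X^p - 'X)%:F.
Proof. by rewrite /fF /xF tofracB tofracXn. Qed.

Lemma fF_neq0 : (1 < p)%N -> fF k p != 0.
Proof.
move=> p_gt1; rewrite fFE tofrac_eq0; apply/eqP => /(congr1 (coefp p)) /=.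
rewrite coefB coefXn coefX eqxx gtn_eqF // subr0 coef0 => /eqP.
by rewrite oner_eq0.
Qed.

Lemma omega_ofE (v : 'rV[k]_g) : omega_of v = (0, (rVpoly v)%:F / fF k p).
Proof.
have omegaE i : omega k p i = (0, xF k ^+ i / fF k p).
  rewrite /omega /mulK /invK /yK /= !mul0r addr0 expr0n /= expr1n mul1r sub0r.
  by rewrite mulr0 addr0 invrN mulrN mulNr opprK mul1r.
rewrite /omega_of; congr (_, _); first by apply: big1 => i _; rewrite omegaE mulr0.
rewrite rVpolyE rmorph_sum mulr_suml; apply: eq_bigr => i _.
by rewrite omegaE /= -mul_polyC rmorphM rmorphXn mulrA.
Qed.

Lemma omega_of_inj : (1 < p)%N -> injective (@omega_of k p).
Proof.
move=> p_gt1 v v' /(congr1 snd); rewrite !omega_ofE /=.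
move/(mulIf (invr_neq0 (fF_neq0 p_gt1)))/eqP; rewrite tofrac_eq => /eqP.
exact: (can_inj (@rVpolyK _ _)).
Qed.
End Differentials.

Section MobiusPolys.
Variables (k : fieldType) (p : nat) (s : 'M['F_p]_2).
Local Notation a := (@ent k p s 0 0).
Local Notation b := (@ent k p s 0 1).
Local Notation c := (@ent k p s 1 0).
Local Notation d := (@ent k p s 1 1).
Local Notation g := (genus p).

Definition mob_num : {poly k} := a *: 'X + b%:P.
Definition mob_den : {poly k} := c *: 'X + d%:P.

(* [mob_rVpoly v] is [mob_den ^ (g-1) * P(mob_num / mob_den)] for [P := rVpoly v]. *)
Definition mob_rVpoly (v : 'rV[k]_g) : {poly k} :=
  \sum_(i < g) v 0 i *: (mob_num ^+ i * mob_den ^+ (g.-1 - i)).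
End MobiusPolys.

Section Mobius.
Variables (k : closedFieldType) (p : nat) (s : 'M['F_p]_2).
Hypotheses (p_pr : prime p) (p_char : p \in [pchar k]) (det_s : \det s = 1).
Local Notation F := {fraction {poly k}}.
Local Notation a := (@ent k p s 0 0).
Local Notation b := (@ent k p s 0 1).
Local Notation c := (@ent k p s 1 0).
Local Notation d := (@ent k p s 1 1).

Local Notation mob_num := (@mob_num k p s).
Local Notation mob_den := (@mob_den k p s).

Let det_abcd : a * d - b * c = 1 := det_ent p_pr p_char det_s.

Definition mob_eval : {rmorphism {poly k} -> F} :=
  horner_eval (@mob k p s) \o map_poly (@FracField.tofrac _ \o polyC).

Lemma mobE : @mob k p s = mob_num%:F / mob_den%:F.
Proof. by []. Qed.

Lemma mob_den_neq0 : mob_den != 0.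
Proof.
apply: contra_eq_neq det_abcd => den0.
have c0 : c = 0 by rewrite -(coef1_affine c d) -/mob_den den0 coef0.
have d0 : d = 0 by rewrite -(coef0_affine c d) -/mob_den den0 coef0.
by rewrite c0 d0 !mulr0 subr0 eq_sym oner_neq0.
Qed.

Lemma mob_eval_X : mob_eval 'X = @mob k p s.
Proof. by rewrite /= horner_evalE map_polyX hornerX. Qed.

Lemma mob_eval_C x : mob_eval x%:P = x%:P%:F.
Proof. by rewrite /= horner_evalE map_polyC hornerC. Qed.

(* Over an algebraically closed field it suffices to see that no [mob - z] vanishes, i.e. that
   [mob_num] is not a constant multiple of [mob_den]: that would force [det s = 0]. *)
Lemma mob_eval_neq0 P : P != 0 -> mob_eval P != 0.
Proof.
move=> P_neq0; have [r ->] := closed_field_poly_normal P.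
rewrite -mul_polyC rmorphM mulf_neq0 //.
  by rewrite mob_eval_C tofrac_eq0 polyC_eq0 lead_coef_eq0.
rewrite rmorph_prod prodf_seq_neq0; apply/allP => z _.
rewrite rmorphB mob_eval_X mob_eval_C subr_eq0; apply/negP => /eqP mob_z.
have /eqP : mob_num%:F = (z%:P * mob_den)%:F.
  by rewrite tofracM -mob_z mobE mulfVK // tofrac_eq0 mob_den_neq0.
rewrite tofrac_eq => /eqP num_z.
have a_z : a = z * c by rewrite -(coef1_affine a b) -/mob_num num_z coefCM coef1_affine.
have b_z : b = z * d by rewrite -(coef0_affine a b) -/mob_num num_z coefCM coef0_affine.
move/eqP: det_abcd; rewrite a_z b_z.
by rewrite mulrAC [z * d * c]mulrAC subrr eq_sym oner_eq0.
Qed.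

Lemma subF_div n e : e != 0 -> subF s (n%:F / e%:F) = mob_eval n / mob_eval e.
Proof.
move=> e_neq0; rewrite /subF; set q := n%:F / e%:F.
have q_repr := frac_repr q; have dq_neq0 := denom_repr_neq0 q.
move: (repr q) q_repr dq_neq0 => r q_repr dq_neq0.
have cross : \n_r * e = n * \d_r by apply: tofrac_div_eq => //; rewrite -q_repr.
apply/eqP; rewrite eqr_div ?mob_eval_neq0 //.
change (mob_eval \n_r * mob_eval e == mob_eval n * mob_eval \d_r).
by rewrite -!rmorphM /= cross.
Qed.

Lemma subF_xF : subF s (xF k) = @mob k p s.
Proof.
have -> : xF k = 'X%:F / 1%:F by rewrite tofrac1 divr1.
by rewrite subF_div ?oner_neq0 // mob_eval_X rmorph1 divr1.
Qed.

Lemma subF0 : subF s (0 : F) = 0.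
Proof.
have -> : (0 : F) = 0%:F / 1%:F by rewrite rmorph0 mul0r.
by rewrite subF_div ?oner_neq0 // !rmorph0 !mul0r.
Qed.

Lemma derF_mob : derF (subF s (xF k)) = (mob_den%:F ^+ 2)^-1.
Proof.
rewrite subF_xF mobE derF_div ?mob_den_neq0 // !deriv_affine.
have -> : a%:P * mob_den - mob_num * c%:P = 1.
  by rewrite /mob_den /mob_num -!mul_polyC -polyC1 -det_abcd polyCB !polyCM; ring.
by rewrite tofrac1 div1r tofracXn.
Qed.

Lemma mob_frobenius : mob_num ^+ p * mob_den - mob_num * mob_den ^+ p = 'X^p - 'X.
Proof.
have ent_p i j : @ent k p s i j ^+ p = @ent k p s i j.
  by rewrite -(pFrobenius_autE p_char) pFrobenius_aut_nat.
rewrite /mob_num /mob_den !frobenius_affine //.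
rewrite -[RHS]mul1r -polyC1 -det_abcd -!mul_polyC polyCB !polyCM; ring.
Qed.

Lemma mob_eval_f : mob_eval ('X^p - 'X) = ('X^p - 'X)%:F / mob_den%:F ^+ p.+1.
Proof.
rewrite rmorphB rmorphXn mob_eval_X mobE -mob_frobenius tofracB !tofracM !tofracXn.
have den_neq0 : mob_den%:F != 0 by rewrite tofrac_eq0 mob_den_neq0.
by rewrite expr_div_n -mulNr addf_div ?expf_neq0 // mulNr exprSr.
Qed.

Lemma mob_eval_rVpoly (v : 'rV[k]_(genus p)) :
  mob_eval (rVpoly v) * mob_den%:F ^+ (genus p).-1 = (mob_rVpoly s v)%:F.
Proof.
rewrite rVpolyE /mob_rVpoly !rmorph_sum mulr_suml; apply: eq_bigr => i _.
rewrite -!mul_polyC (rmorphM mob_eval) (rmorphXn mob_eval) mob_eval_X mob_eval_C.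
rewrite mobE !rmorphM !rmorphXn -mulrA; congr (_ * _).
have i_le : (i <= (genus p).-1)%N by have := ltn_ord i; lia.
rewrite -{1}(subnKC i_le) exprD expr_div_n mulrA divfK //.
by rewrite expf_neq0 // tofrac_eq0 mob_den_neq0.
Qed.

Hypothesis p_gt2 : (2 < p)%N.

Lemma pullback_omega_of (v v' : 'rV[k]_(genus p)) :
  rVpoly v' = mob_rVpoly s v -> pullback s (omega_of v) = omega_of v'.
Proof.
move=> v'E; have f_neq0 := fF_neq0 k (prime_gt1 p_pr).
have pE := genus_double p_pr p_gt2; have g_gt0 := genus_gt0 p_pr p_gt2.
have half_p : (p.+1)./2 = (genus p).+1 by rewrite {1}pE -doubleS doubleK.
have succ_p : p.+1 = ((genus p).+1 + 2 + (genus p).-1)%N by rewrite {1}pE; lia.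
rewrite /pullback /actK /sigma_y !omega_ofE /addK /mulK /= derF_mob subF0 fFE.
rewrite subF_div; last by rewrite -tofrac_eq0 -fFE.
rewrite -[(_ *: 'X + _)%:F]/(mob_den%:F) -[uphalf p]/((p.+1)./2) half_p.
rewrite !(mul0r, mulr0, add0r, addr0); congr (_, _).
rewrite mob_eval_f v'E -mob_eval_rVpoly succ_p !exprD.
(* Stated over an abstract field: [field] is far too slow on [{fraction {poly k}}]. *)
have cancel_powers (K : fieldType) (E f L : K) (m n r : nat) : f != 0 -> L != 0 ->
    E / (f / (L ^+ m * L ^+ n * L ^+ r)) / L ^+ m / L ^+ n = E * L ^+ r / f.
  by move=> f_neq0' L_neq0; field; rewrite f_neq0' !expf_neq0.
have den_neq0 : mob_den%:F != 0 by rewrite tofrac_eq0 mob_den_neq0.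
rewrite fFE in f_neq0.
move: (mob_eval _) (mob_den%:F) ('X^p - 'X)%:F den_neq0 f_neq0 => E L f L_neq0 f_neq0.
exact: cancel_powers.
Qed.
End Mobius.

Section SymmetricPower.
Variables (k : fieldType) (p : nat).
Local Notation g := (genus p).

Definition mnm2 (i j : nat) : 'X_{1..2} :=
  (U_(ord0 : 'I_2) *+ i + U_(ord_max : 'I_2) *+ j)%MM.

Lemma mnm2E0 i j : mnm2 i j ord0 = i.
Proof. by rewrite /mnm2 mnmDE !mulmnE !mnm1E /= mul1n mul0n addn0. Qed.

Lemma mnm2E1 i j : mnm2 i j ord_max = j.
Proof. by rewrite /mnm2 mnmDE !mulmnE !mnm1E /= mul1n mul0n. Qed.

Lemma mnm2_eta (m : 'X_{1..2}) : m = mnm2 (m ord0) (m ord_max).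
Proof.
apply/mnmP => l; case: l => [[|[|l]] l_lt2] //.
- by rewrite (_ : Ordinal _ = ord0) ?mnm2E0 //; apply: val_inj.
- by rewrite (_ : Ordinal _ = ord_max) ?mnm2E1 //; apply: val_inj.
Qed.

Lemma mdeg_mnm2 i j : mdeg (mnm2 i j) = (i + j)%N.
Proof. by rewrite /mnm2 mdegD !mdegMn !mdeg1 !mul1n. Qed.

Lemma sym_ofE (v : 'rV[k]_g) : sym_of v = \sum_(i < g) v 0 i *: 'X_[mnm2 i (g.-1 - i)].
Proof. by apply: eq_bigr => i _; rewrite !mpolyXn -mpolyXD. Qed.

Lemma mcoeff_sym_of (v : 'rV[k]_g) (i : 'I_g) : (sym_of v)@_(mnm2 i (g.-1 - i)) = v 0 i.
Proof.
rewrite sym_ofE raddf_sum (bigD1 i) //= mcoeffZ mcoeffX eqxx mulr1 big1 ?addr0 //.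
move=> j j_neq_i; rewrite mcoeffZ mcoeffX; case: eqP => [ji|]; last by rewrite mulr0.
move/(congr1 (fun m : 'X_{1..2} => m ord0)): ji; rewrite !mnm2E0 => /val_inj ji.
by rewrite ji eqxx in j_neq_i.
Qed.

Lemma sym_of_homog (v : 'rV[k]_g) : sym_of v \is g.-1.-homog.
Proof.
rewrite sym_ofE; apply: rpred_sum => i _; apply: dhomogZ.
rewrite dhomogX; change (mdeg (mnm2 i (g.-1 - i)) == g.-1).
by rewrite mdeg_mnm2 subnKC //; have := ltn_ord i; lia.
Qed.

Lemma sym_of_inj : injective (@sym_of k p).
Proof.
move=> v v' vv'; apply/rowP => i.
by rewrite -!(mcoeff_sym_of _ i) vv'.
Qed.

Lemma sym_of_surj (P : {mpoly k[2]}) : (0 < g)%N -> P \is g.-1.-homog ->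
  exists v : 'rV[k]_g, P = sym_of v.
Proof.
move=> g_gt0 P_homog; exists (\row_(i < g) P@_(mnm2 i (g.-1 - i))).
apply/mpolyP => m; have [deg_m|deg_m] := eqVneq (mdeg m) g.-1; last first.
  by rewrite !(dhomog_nemf_coeff _ deg_m) ?sym_of_homog.
have m0_lt : (m ord0 < g)%N by move: deg_m; rewrite {1}(mnm2_eta m) mdeg_mnm2; lia.
have -> : m = mnm2 (Ordinal m0_lt) (g.-1 - Ordinal m0_lt).
  rewrite {1}(mnm2_eta m) /=; move: deg_m; rewrite {1}(mnm2_eta m) mdeg_mnm2 => <-.
  by rewrite addKn.
by rewrite mcoeff_sym_of mxE.
Qed.

Variable s : 'M['F_p]_2.
Local Notation a := (@ent k p s 0 0).
Local Notation b := (@ent k p s 0 1).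
Local Notation c := (@ent k p s 1 0).
Local Notation d := (@ent k p s 1 1).

Lemma actV_sym_of (v : 'rV[k]_g) : actV s (sym_of v) =
  \sum_(i < g) v 0 i *: ((a *: 'X_0 + b *: 'X_1) ^+ i * (c *: 'X_0 + d *: 'X_1) ^+ (g.-1 - i)).
Proof.
rewrite /actV /sym_of raddf_sum; apply: eq_bigr => i _.
by rewrite /= comp_mpolyZ rmorphM !rmorphXn /= !comp_mpolyXU.
Qed.

Lemma actV_sym_of_homog (v : 'rV[k]_g) : actV s (sym_of v) \is g.-1.-homog.
Proof.
have linear_homog (u w : k) : u *: 'X_0 + w *: 'X_1 \is [in k[2], 1.-homog].
  by apply: rpredD; apply: dhomogZ; rewrite dhomogX /= mdeg1.
rewrite actV_sym_of; apply: rpred_sum => i _; apply: dhomogZ.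
have := dhomogM (dhomogMn i (linear_homog a b)) (dhomogMn (g.-1 - i) (linear_homog c d)).
by rewrite !mul1n subnKC //; have := ltn_ord i; lia.
Qed.

(* Dehomogenization [u |-> x, v |-> 1] identifies [Sym^(g-1)] with polynomials of degree
   [< g] in [x], and turns the action of [s] into the Moebius substitution. *)
Local Notation dehomog :=
  (mmap (@polyC k) (fun l : 'I_2 => if l == ord0 then 'X else (1 : {poly k}))).

Lemma dehomog_sym_of (v : 'rV[k]_g) : dehomog (sym_of v) = rVpoly v.
Proof.
rewrite /sym_of rVpolyE raddf_sum; apply: eq_bigr => i _.
by rewrite /= mmapZ rmorphM !rmorphXn /= !mmapX !mmap1U /= expr1n mulr1 mul_polyC.
Qed.

Lemma dehomog_actV_sym_of (v : 'rV[k]_g) : dehomog (actV s (sym_of v)) = mob_rVpoly s v.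
Proof.
rewrite actV_sym_of raddf_sum; apply: eq_bigr => i _.
rewrite /= mmapZ rmorphM !rmorphXn !rmorphD /= !mmapZ !mmapX !mmap1U /=.
by rewrite /mob_num /mob_den !mulr1 !mul_polyC.
Qed.

Lemma sym_of_actV_rVpoly (v v' : 'rV[k]_g) :
  sym_of v' = actV s (sym_of v) -> rVpoly v' = mob_rVpoly s v.
Proof. by move/(congr1 dehomog); rewrite dehomog_sym_of dehomog_actV_sym_of. Qed.
End SymmetricPower.

Theorem proposition2p2 (k : closedFieldType) (p : nat) :
  prime p -> (2 < p)%N -> p \in [pchar k] ->
  [/\ injective (@omega_of k p),
      injective (@sym_of k p),
      (forall c : 'rV[k]_(genus p), @sym_of k p c \is (genus p).-1.-homog),
      (forall P : {mpoly k[2]}, P \is (genus p).-1.-homog ->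
         exists c : 'rV[k]_(genus p), P = @sym_of k p c)
    & forall s : 'M['F_p]_2, \det s = 1 ->
      forall c : 'rV[k]_(genus p), exists c' : 'rV[k]_(genus p),
        pullback s (@omega_of k p c) = @omega_of k p c' /\
        @sym_of k p c' = actV s (@sym_of k p c)].
Proof.
move=> p_pr p_gt2 p_char; have g_gt0 := genus_gt0 p_pr p_gt2.
split.
- exact: omega_of_inj (prime_gt1 p_pr).
- exact: sym_of_inj.
- exact: sym_of_homog.
- by move=> P; apply: sym_of_surj.
move=> s det_s v; have [v' v'E] := sym_of_surj g_gt0 (actV_sym_of_homog s v).
exists v'; split=> //.
by apply: pullback_omega_of => //; apply: sym_of_actV_rVpoly.
Qed.
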